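(* Let ${\bm{x}}^1,\dots,{\bm{x}}^M\in\mathbb{R}^d$ (one data point per client, i.e. $n=1$) satisfy $\|{\bm{x}}^m\|\le1$ and be linearly separable with maximum margin $\gamma=\max_{\|{\bm{w}}\|=1}\min_m\langle{\bm{w}},{\bm{x}}^m\rangle>0$. Let $\ell(z)=\log(1+e^{-z})$, $F_m({\bm{w}})=\ell(\langle{\bm{w}},{\bm{x}}^m\rangle)$. Run Local GD with stepsize $\eta>0$ and $K\in\mathbb{N}$ local steps: ${\bm{w}}_{r,0}^m={\bm{w}}_r$, ${\bm{w}}_{r,k+1}^m={\bm{w}}_{r,k}^m-\eta\nabla F_m({\bm{w}}_{r,k}^m)$ ($k=0,\dots,K-1$). Define $$\beta_r^m=\frac1K\sum_{k=0}^{K-1}\frac{|\ell'(\langle{\bm{w}}_{r,k}^m,{\bm{x}}^m\rangle)|}{|\ell'(\langle{\bm{w}}_r,{\bm{x}}^m\rangle)|}.$$ Suppose ${\bm{w}}_r={\bm{0}}$. Then $\beta_r^m\le\mathcal O\left(\frac1K+\frac1{\eta\gamma^2K}\log(1+\eta\gamma^2K)\right)$, and if additionally $\eta\ge1$, then $\beta_r^m\le\widetilde{\mathcal O}\left(\frac1K\left(1+\frac1{\gamma^2}\right)\right)$.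
   Context: $\mathcal O$ hides universal constants only; $\widetilde{\mathcal O}$ hides universal constants and logarithmic factors. Linear separability means there is ${\bm{w}}$ with $\langle{\bm{w}},{\bm{x}}^m\rangle>0$ for all $m$ (labels absorbed into data). *)

From HB Require Import structures.
From mathcomp Require Import all_boot all_order all_algebra.
From mathcomp Require Import reals.
From mathcomp Require Import sequences.
From mathcomp.analysis Require Import exp.
Set Implicit Arguments. Unset Strict Implicit. Unset Printing Implicit Defensive.
Import Order.TTheory GRing.Theory Num.Theory.
Local Open Scope ring_scope.

Section Defs.
Variable R : realType.

Definition dot (d : nat) (u v : 'rV[R]_d) : R := \sum_(i < d) u 0 i * v 0 i.

Definition logloss (z : R) : R := ln (1 + expR (- z)).

Definition logloss' (z : R) : R := - (expR (- z) / (1 + expR (- z))).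

Definition gradF (d : nat) (x w : 'rV[R]_d) : 'rV[R]_d := logloss' (dot w x) *: x.

Fixpoint local_iter (d : nat) (eta : R) (x w0 : 'rV[R]_d) (k : nat) : 'rV[R]_d :=
  match k with
  | 0 => w0
  | k'.+1 => let w := local_iter eta x w0 k' in w - eta *: gradF x w
  end.

Definition beta (d : nat) (eta : R) (K : nat) (x w0 : 'rV[R]_d) : R :=
  K%:R^-1 * \sum_(k < K)
     (`|logloss' (dot (local_iter eta x w0 k) x)| / `|logloss' (dot w0 x)|).

Definition max_margin (d M : nat) (X : 'I_M -> 'rV[R]_d) (gamma : R) : Prop :=
  (exists w : 'rV[R]_d, dot w w = 1 /\ forall m, gamma <= dot w (X m)) /\
  (forall w : 'rV[R]_d, dot w w = 1 -> exists m, dot w (X m) <= gamma).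

End Defs.

From HB Require Import structures.
From mathcomp Require Import all_boot all_order all_algebra.
From mathcomp Require Import reals.
From mathcomp Require Import sequences.
From mathcomp.analysis Require Import exp.
From mathcomp Require Import ring lra.
Set Implicit Arguments. Unset Strict Implicit. Unset Printing Implicit Defensive.
Import Order.TTheory GRing.Theory Num.Theory.
Local Open Scope ring_scope.

(** Starting from [0], the margin [z_k = <w_k, x>] of the local iterates obeys
    [z_(k+1) = z_k + eta |x|^2 |l'(z_k)|].  Since [e^z |l'(z)| >= 1/2] for
    [z >= 0], each step raises [e^(z_k)] by at least [c = eta |x|^2 / 2], so
    [e^(z_k) >= 1 + k c] and [|l'(z_k)| / |l'(0)| <= 2 e^(-z_k) <= 2 / (1 + k c)].
    Comparing the sum of these terms with an integral gives
    [beta <= (2 / K) (1 + ln (1 + K c) / c)].  Finally [|x| >= gamma] by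
    maximality of the margin, so [c] may be taken to be [eta gamma^2 / 2], or
    [gamma^2 / 2] when [eta >= 1]. *)

Section Dot.
Variables (R : realType) (d : nat).
Implicit Types (a : R) (u v w x : 'rV[R]_d).

Lemma dotZDl a u v x : dot (a *: u + v) x = a * dot u x + dot v x.
Proof. by rewrite /dot mulr_sumr -big_split; apply: eq_bigr => i _; rewrite !mxE mulrA mulrDl. Qed.

Lemma dotC u v : dot u v = dot v u.
Proof. by apply: eq_bigr => i _; rewrite mulrC. Qed.

Lemma dot0l x : dot 0 x = 0.
Proof. by rewrite /dot big1 // => i _; rewrite mxE mul0r. Qed.

Lemma dotxx_ge0 x : 0 <= dot x x.
Proof. by rewrite sumr_ge0 // => i _; rewrite -expr2 sqr_ge0. Qed.

Lemma sqr_dot_le_unit w x : dot w w = 1 -> dot w x ^+ 2 <= dot x x.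
Proof.
move=> w1; set t := dot w x.
have wx : dot x w = t by rewrite dotC.
have := dotxx_ge0 ((- t) *: w + x).
rewrite dotZDl !(dotC _ ((- t) *: w + x)) !dotZDl w1 wx -/t.
lra.
Qed.

End Dot.

Lemma max_margin_sqr_le (R : realType) d M (X : 'I_M -> 'rV[R]_d) gamma m :
  max_margin X gamma -> 0 <= gamma -> gamma ^+ 2 <= dot (X m) (X m).
Proof.
move=> [[w [w1 wX]] _] g0; apply: le_trans (sqr_dot_le_unit (X m) w1).
by rewrite lerXn2r ?nnegrE // (le_trans g0).
Qed.

Section Logistic.
Variable R : realType.
Implicit Types z b : R.

Lemma logloss'_lt0 z : logloss' z < 0.
Proof. by rewrite oppr_lt0 divr_gt0 ?addr_gt0 ?expR_gt0. Qed.

Lemma normr_logloss' z : `|logloss' z| = - logloss' z.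
Proof. by rewrite ltr0_norm ?logloss'_lt0. Qed.

Lemma normr_logloss'0 : `|logloss' 0| = 2^-1 :> R.
Proof. by rewrite normr_logloss' /logloss' opprK oppr0 expR0 div1r. Qed.

Lemma oppr_logloss'_le_expRN z : - logloss' z <= expR (- z).
Proof.
rewrite opprK ler_pdivrMr ?addr_gt0 ?expR_gt0 //.
by rewrite ler_peMr ?expR_ge0 // lerDl expR_ge0.
Qed.

Lemma expR_oppr_logloss'_ge z : 0 <= z -> 2^-1 <= expR z * - logloss' z.
Proof.
move=> z0; have e1 : expR (- z) <= 1 by rewrite expR_le1 oppr_le0.
rewrite opprK mulrA expRxMexpNx_1 div1r lef_pV2 ?posrE ?addr_gt0 ?expR_gt0 //.
by rewrite lerD2l.
Qed.

Lemma expR_logistic_step z b : 0 <= z -> 0 <= b ->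
  expR z + b / 2 <= expR (z - b * logloss' z).
Proof.
move=> z0 b0; have s0 : 0 <= - logloss' z by rewrite oppr_ge0 ltW ?logloss'_lt0.
rewrite -mulrN expRD.
apply: le_trans (ler_wpM2l (expR_ge0 z) (expR_ge1Dx (b * - logloss' z))).
rewrite mulrDr mulr1 lerD2l mulrCA ler_wpM2l //.
exact: expR_oppr_logloss'_ge.
Qed.

End Logistic.

Lemma ln_increment_ge (R : realType) (u c : R) : 0 < u -> 0 < c ->
  c / (u + c) <= ln (u + c) - ln u.
Proof.
move=> u0 c0; have uc0 : 0 < u + c by rewrite addr_gt0.
have ratio : u / (u + c) = 1 + - (c / (u + c)) by field; rewrite lt0r_neq0.
have gtN1 : -1 < - (c / (u + c)) by rewrite ltrN2 ltr_pdivrMr // mul1r ltrDr.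
have := le_ln1Dx gtN1; rewrite -ratio ln_div ?posrE //; lra.
Qed.

Lemma sum_inv_affine_le (R : realType) (c : R) n : 0 < c ->
  \sum_(k < n.+1) (1 + k%:R * c)^-1 <= 1 + ln (1 + n%:R * c) / c.
Proof.
move=> c0; elim: n => [|n IH].
  by rewrite big_ord1 /= mul0r addr0 invr1 (ln1 R) mul0r addr0.
rewrite big_ord_recr /=; set u := 1 + n%:R * c in IH *.
have u0 : 0 < u by rewrite ltr_pwDl // mulr_ge0 // ltW.
have -> : 1 + n.+1%:R * c = u + c by rewrite -nat1r /u; ring.
have step : (u + c)^-1 <= (ln (u + c) - ln u) / c.
  by rewrite ler_pdivlMr // mulrC ln_increment_ge.
have : (ln (u + c) - ln u) / c = ln (u + c) / c - ln u / c by rewrite mulrBl.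
lra.
Qed.

Section LocalGD.
Variables (R : realType) (d : nat) (eta : R) (x : 'rV[R]_d).

Lemma dot_local_iterS w0 k :
  dot (local_iter eta x w0 k.+1) x =
  dot (local_iter eta x w0 k) x - eta * dot x x * logloss' (dot (local_iter eta x w0 k) x).
Proof. by rewrite /= /gradF scalerA -scaleNr addrC dotZDl; ring. Qed.

Lemma dot_local_iter0_growth c : 0 <= c -> c <= eta * dot x x / 2 -> forall k,
  0 <= dot (local_iter eta x 0 k) x /\ 1 + k%:R * c <= expR (dot (local_iter eta x 0 k) x).
Proof.
move=> c0 cb; have b0 : 0 <= eta * dot x x by lra.
elim=> [|k [z0 zE]]; first by rewrite dot0l expR0 mul0r addr0.
rewrite dot_local_iterS; set z := dot _ x in z0 zE *.
have s0 : 0 <= - logloss' z by rewrite oppr_ge0 ltW ?logloss'_lt0.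
have := mulr_ge0 b0 s0; rewrite mulrN => drift.
split; first lra.
apply: le_trans (expR_logistic_step z0 b0); rewrite -nat1r mulrDl mul1r; lra.
Qed.

Lemma local_iter0_ratio_le c k : 0 <= c -> c <= eta * dot x x / 2 ->
  `|logloss' (dot (local_iter eta x 0 k) x)| / `|logloss' (dot 0 x)| <= 2 * (1 + k%:R * c)^-1.
Proof.
move=> c0 cb; have [_ growth] := dot_local_iter0_growth c0 cb k.
have pos : 0 < 1 + k%:R * c by rewrite ltr_pwDl // mulr_ge0.
rewrite dot0l normr_logloss'0 invrK mulrC normr_logloss' ler_wpM2l //.
apply: le_trans (oppr_logloss'_le_expRN _) _.
by rewrite expRN lef_pV2 ?posrE ?expR_gt0.
Qed.

Lemma beta0_le c K : 0 < c -> c <= eta * dot x x / 2 -> (0 < K)%N ->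
  beta eta K x 0 <= 2 * K%:R^-1 * (1 + ln (1 + K%:R * c) / c).
Proof.
case: K => // K c0 cb _; rewrite /beta [2 * _]mulrC -mulrA ler_wpM2l ?invr_ge0 //.
apply: le_trans; first by apply: ler_sum => k _; apply: local_iter0_ratio_le (ltW c0) cb.
rewrite -mulr_sumr ler_wpM2l //; apply: le_trans (sum_inv_affine_le _ c0) _.
have pos : 0 < 1 + K%:R * c by rewrite ltr_pwDl // mulr_ge0 // ltW.
rewrite lerD2l; apply: ler_wpM2r; first by rewrite invr_ge0 ltW.
have le_pos : 1 + K%:R * c <= 1 + K.+1%:R * c by rewrite lerD2l ler_pM2r // ler_nat.
by rewrite ler_ln ?posrE // (lt_le_trans pos).
Qed.

End LocalGD.

Section Rates.
Variables (R : realType) (d : nat) (eta gamma : R) (x : 'rV[R]_d) (K : nat).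
Hypotheses (gamma_gt0 : 0 < gamma) (margin : gamma ^+ 2 <= dot x x) (K_gt0 : (0 < K)%N).

Let k_ge0 : 0 <= K%:R^-1 :> R. Proof. by rewrite invr_ge0. Qed.
Let K_gt0R : 0 < K%:R :> R. Proof. by rewrite ltr0n. Qed.
Let gamma2_gt0 : 0 < gamma ^+ 2. Proof. by rewrite exprn_gt0. Qed.

Lemma beta0_le_margin : 0 < eta ->
  beta eta K x 0 <=
    4 * (K%:R^-1 + ln (1 + eta * gamma ^+ 2 * K%:R) / (eta * gamma ^+ 2 * K%:R)).
Proof.
move=> eta_gt0; set a := eta * gamma ^+ 2.
have a_gt0 : 0 < a by rewrite mulr_gt0.
have cb : a / 2 <= eta * dot x x / 2 by rewrite ler_pM2r ?invr_gt0 // ler_pM2l.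
apply: le_trans (beta0_le (c := a / 2) _ cb K_gt0) _; first by rewrite divr_gt0.
have pos : 0 < 1 + K%:R * (a / 2) by rewrite ltr_pwDl // mulr_ge0 // ltW // divr_gt0.
have Lle : ln (1 + K%:R * (a / 2)) <= ln (1 + a * K%:R).
  rewrite ler_ln ?posrE //; last by rewrite ltr_pwDl // mulr_ge0 // ltW.
  by have := mulr_gt0 a_gt0 K_gt0R; lra.
have -> : 2 * K%:R^-1 * (1 + ln (1 + K%:R * (a / 2)) / (a / 2)) =
          2 * K%:R^-1 + 4 * (ln (1 + K%:R * (a / 2)) / (a * K%:R)).
  by field; rewrite !lt0r_neq0.
rewrite mulrDr; apply: lerD; first by rewrite ler_pM2r ?invr_gt0 // ler_nat.
by rewrite ler_pM2l // ler_wpM2r // invr_ge0 ltW // mulr_gt0.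
Qed.

Lemma beta0_le_large_step : 1 <= eta -> dot x x <= 1 ->
  beta eta K x 0 <= 4 * (K%:R^-1 * (1 + gamma ^- 2)) * (1 + ln (1 + K%:R)).
Proof.
move=> eta_ge1 x_le1; set c := gamma ^+ 2 / 2.
have c_gt0 : 0 < c by rewrite divr_gt0.
have cb : c <= eta * dot x x / 2.
  by rewrite ler_pM2r ?invr_gt0 // (le_trans margin) // ler_peMl // (le_trans _ margin) ?ltW.
apply: le_trans (beta0_le c_gt0 cb K_gt0) _.
set k := K%:R^-1; set G := gamma ^- 2; set L := ln (1 + K%:R).
set L' := ln (1 + K%:R * c).
have pos : 0 < 1 + K%:R * c by rewrite ltr_pwDl // mulr_ge0 // ltW.
have L'_ge0 : 0 <= L' by rewrite ln_ge0 // lerDl mulr_ge0 // ltW.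
have L'_le : L' <= L.
  have c_le1 : c <= 1.
    by rewrite /c ler_pdivrMr // mul1r (le_trans margin) // (le_trans x_le1) // ler1n.
  have Kc_le : K%:R * c <= K%:R by rewrite -[leRHS]mulr1 ler_wpM2l.
  by rewrite ler_ln ?posrE ?lerD2l // ltr_pwDl.
have -> : 2 * k * (1 + L' / c) = 2 * k + 4 * (k * G * L').
  by rewrite /k /G /c; field; rewrite !lt0r_neq0.
have kG_ge0 : 0 <= k * G by rewrite mulr_ge0 // invr_ge0 ltW.
have := ler_wpM2l kG_ge0 L'_le.
have : 0 <= k * L by rewrite mulr_ge0 // (le_trans L'_ge0).
have := k_ge0; rewrite -/k.
lra.
Qed.

End Rates.

Theorem lemmaB7 :
  exists C : nat,
  forall (R : realType) (d M : nat) (X : 'I_M -> 'rV[R]_d) (gamma eta : R) (K : nat),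
    (0 < M)%N ->
    (forall m, dot (X m) (X m) <= 1) ->
    max_margin X gamma -> 0 < gamma ->
    0 < eta -> (0 < K)%N ->
    forall m : 'I_M,
      beta eta K (X m) 0 <=
        C%:R * (K%:R^-1 + ln (1 + eta * gamma ^+ 2 * K%:R) / (eta * gamma ^+ 2 * K%:R))
      /\
      (1 <= eta ->
       beta eta K (X m) 0 <=
         C%:R * (K%:R^-1 * (1 + gamma ^- 2)) * (1 + ln (1 + K%:R))).
Proof.
exists 4%N => R d M X gamma eta K _ X_le1 margin gamma_gt0 eta_gt0 K_gt0 m.
have Xm_margin := max_margin_sqr_le m margin (ltW gamma_gt0).
split; first exact: beta0_le_margin.
by move=> eta_ge1; apply: beta0_le_large_step.
Qed.
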